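(* Let $T$ be an $X$-tree. A cord $ab\in\binom{X}{2}$ is a co-loop of $\mathbb{M}(T)$, i.e. it is contained in every edge-weight lasso for $T$ (equivalently in every basis of $\mathbb{M}(T)$), if and only if $ab$ is a proper $T$-cherry.
   Context: Let $X$ be a finite set with $|X|=n\ge 3$. An $X$-tree is a finite tree $T=(V,E)$ whose set of degree-1 vertices is exactly $X$ and which has no vertices of degree $2$. A cord is a $2$-subset $xy$ of $X$. For each cord $xy$, $\lambda^T_{xy}:\mathbb{R}^E\to\mathbb{R}$, $\omega\mapsto\sum_{e\in E(x|y)}\omega(e)$ where $E(x|y)$ is the set of edges on the path from $x$ to $y$. $\mathbb{M}(T)$ is the matroid on ground set $\binom{X}{2}$ whose rank function is $\mathrm{rk}^T(\mathcal{L})=\dim\mathrm{span}\{\lambda^T_{xy}:xy\in\mathcal{L}\}$; its rank is $|E|$. An edge-weight lasso for $T$ is a set $\mathcal{L}\subseteq\binom{X}{2}$ with $\mathrm{rk}^T(\mathcal{L})=|E|$. For $x\in X$ let $e_x$ be the unique edge containing $x$. A cord $ab$ is a $T$-cherry if $e_a$ and $e_b$ share a vertex, and a proper $T$-cherry if moreover this shared vertex has degree $3$. *)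

From HB Require Import structures.
From mathcomp Require Import all_boot all_order all_algebra.
Set Implicit Arguments. Unset Strict Implicit. Unset Printing Implicit Defensive.
Import Order.TTheory GRing.Theory Num.Theory.

Section XTrees.
Variable V : finType.
Variable e : rel V.

Definition deg (v : V) : nat := #|[set w | e v w]|.

Definition Edges : {set {set V}} := [set [set uv.1; uv.2] | uv in [set uv : V * V | e uv.1 uv.2]].

Definition edgeT := {f : {set V} | f \in Edges}.

Definition is_tree : Prop :=
  [/\ symmetric e, irreflexive e, (forall u v, connect e u v) &
      (forall p : seq V, uniq p -> 2 < size p -> ~~ cycle e p)].

Definition is_Xtree (X : {set V}) : Prop :=
  [/\ is_tree, X = [set v | deg v == 1] & forall v, deg v != 2].

Definition walk_edges (x : V) (p : seq V) : seq {set V} :=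
  [seq [set uv.1; uv.2] | uv <- zip (x :: p) p].

(* f is an edge of the (simple) path from x to y; a simple path x :: t
   has size t < #|V|, so the bounded search covers all simple paths *)
Definition on_path (x y : V) (f : {set V}) : bool :=
  [exists k : 'I_#|V|, [exists t : k.-tuple V,
     [&& path e x t, last x t == y, uniq (x :: t) & f \in walk_edges x t]]].

Definition on_cord_path (c : {set V}) (f : {set V}) : bool :=
  [exists x in c, exists y in c, (x != y) && on_path x y f].

Definition is_cord (X : {set V}) (c : {set V}) : bool := (c \subset X) && (#|c| == 2).

Variable R : realFieldType.

(* lambda^T_{xy} : R^E -> R, omega |-> sum_{f in E(x|y)} omega f,
   represented by its coefficient vector in R^E (the dual basis) *)
Definition lam (c : {set V}) : {ffun edgeT -> R^o} :=
  [ffun f : edgeT => (on_cord_path c (val f))%:R%R].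

Definition rkT (L : {set {set V}}) : nat :=
  \dim (span [seq lam c | c <- enum L]).

Definition is_lasso (X : {set V}) (L : {set {set V}}) : Prop :=
  {subset L <= is_cord X} /\ rkT L = #|Edges|.

End XTrees.

Section Cherries.
Variable V : finType.
Variable e : rel V.

Definition pendant_edge (x : V) : {set V} :=
  odflt set0 [pick f in Edges e | x \in f].

Definition is_cherry (a b : V) : bool :=
  [exists v, (v \in pendant_edge a) && (v \in pendant_edge b)].

Definition is_proper_cherry (a b : V) : bool :=
  [exists v, [&& v \in pendant_edge a, v \in pendant_edge b & deg e v == 3]].
End Cherries.

(* By [on_cordE], lambda_xy is the split vector of x and y: the indicator of
   the edges whose deletion separates x from y.  Deleting an edge 2-colours
   the tree ([cut_connectE]), so identities between split vectors reduce to
   finite boolean checks; the basic one is the four-point identity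
   [split_vec_quartet].
   - If ab is a proper cherry at v, with third neighbour g, the linear form
     w |-> w(va) + w(vb) - w(vg) kills lambda_c for every cord c <> ab but
     is not zero, so every spanning set of cords contains ab
     ([coloop_of_form], [proper_cherry_coloop]).
   - Otherwise lambda_ab is a combination of the split vectors of other
     pairs of leaves ([not_proper_cherry_split], according to whether a and
     b share their neighbour), and the leaf split vectors span the whole
     space because twice each edge indicator is a four-point combination
     ([leaf_splits_span]); so the cords other than ab form a lasso
     ([lasso_without]). *)

From HB Require Import structures.
From mathcomp Require Import all_boot all_order all_algebra zify ring lra.
Set Implicit Arguments. Unset Strict Implicit. Unset Printing Implicit Defensive.
Import GRing.Theory Num.Theory.

Section SpanKernel.
Variables (K : fieldType) (vT : vectType K).

Lemma span_kernel (phi : vT -> K) (s : seq vT) :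
  (forall k u v, phi (k *: u + v) = k * phi u + phi v)%R ->
  {in s, forall v, phi v = 0%R} -> forall v, v \in <<s>>%VS -> phi v = 0%R.
Proof.
move=> phi_lin phi_s v /(@coord_span _ _ _ (in_tuple s)) ->.
have phi0 : phi 0%R = 0%R.
  have := phi_lin 1%R 0%R 0%R; rewrite scale1r addr0 mul1r -{1}[phi 0%R]addr0.
  by move/addrI <-.
elim/big_rec: _ => [//|i w _ IH]; rewrite phi_lin IH addr0 phi_s ?mulr0 //.
exact: mem_nth.
Qed.

End SpanKernel.

Section Tree.
Variables (V : finType) (e : rel V).
Hypothesis e_sym : symmetric e.
Hypothesis e_irr : irreflexive e.
Hypothesis e_conn : forall u v, connect e u v.
Hypothesis e_acyclic : forall p : seq V, uniq p -> 2 < size p -> ~~ cycle e p.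

Definition cut (f : {set V}) : rel V := fun x y => e x y && ([set x; y] != f).

Definition side (u n z : V) : bool := connect (cut [set u; n]) n z.

Lemma cut_sym f : symmetric (cut f).
Proof. by move=> x y; rewrite /cut e_sym setUC. Qed.

Lemma cut_connect_sym f x y : connect (cut f) x y = connect (cut f) y x.
Proof. exact: (sym_connect_sym (cut_sym f)). Qed.

Lemma cut_sub f : subrel (cut f) e.
Proof. by move=> x y /andP[]. Qed.

Lemma connect_cut_avoid p q x t : path e x t -> p \notin x :: t ->
  connect (cut [set p; q]) x (last x t).
Proof.
elim: t x => [|y t IH] x /=; first by rewrite connect0.
move=> /andP[exy pt]; rewrite in_cons negb_or => /andP[px pyt].
apply: connect_trans (IH y pt pyt); apply: connect1; rewrite /cut exy /=.
apply/negP => /eqP pq_xy.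
have: p \in [set x; y] by rewrite pq_xy !inE eqxx.
by rewrite !inE (negbTE px); move: pyt; rewrite in_cons negb_or => /andP[/negbTE ->].
Qed.

Lemma cut_ends u n : e u n -> ~~ connect (cut [set u; n]) u n.
Proof.
move=> eun; apply/negP => /connectP [t pt lt]; move: lt.
case/shortenP: pt => t' pt' ut' _ lt.
case: t' pt' ut' lt => [|y [|z r]] pt' ut' lt.
- by rewrite /= in lt; subst n; rewrite e_irr in eun.
- by rewrite /= in lt; subst y; move: pt'; rewrite /= /cut eqxx andbF.
- have := e_acyclic ut' isT; apply/negP.
  rewrite /cycle rcons_path negbK; apply/andP; split.
    exact: (sub_path (@cut_sub _)) pt'.
  by rewrite -lt e_sym.
Qed.

Lemma cut_two_sides p q z :
  connect (cut [set p; q]) p z || connect (cut [set p; q]) q z.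
Proof.
have [t pt ->] := connectP (e_conn p z).
pose P x := connect (cut [set p; q]) p x || connect (cut [set p; q]) q x.
suff walk_P x s : path e x s -> P x -> P (last x s).
  by apply: walk_P pt _; rewrite /P connect0.
elim: s x => //= y s IH x /andP[exy ps] Px; apply: IH ps _.
case: (eqVneq [set x; y] [set p; q]) => [xy_pq | xy_pq].
  have: y \in [set p; q] by rewrite -xy_pq !inE eqxx orbT.
  by rewrite /P !inE => /orP[] /eqP ->; rewrite connect0 ?orbT.
have cxy : cut [set p; q] x y by rewrite /cut exy xy_pq.
by case/orP: Px => Px; apply/orP; [left|right];
  apply: connect_trans Px (connect1 cxy).
Qed.

Lemma cut_connectE p q x y : e p q ->
  connect (cut [set p; q]) x y =
  (connect (cut [set p; q]) p x == connect (cut [set p; q]) p y).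
Proof.
move=> epq; have pq := cut_ends epq.
case Hx: (connect (cut [set p; q]) p x); case Hy: (connect (cut [set p; q]) p y).
- by rewrite eqxx; apply: connect_trans Hy; rewrite cut_connect_sym.
- by apply/negP => Hxy; rewrite (connect_trans Hx Hxy) in Hy.
- apply/negP => Hxy; rewrite cut_connect_sym in Hxy.
  by rewrite (connect_trans Hy Hxy) in Hx.
- have := cut_two_sides p q x; have := cut_two_sides p q y.
  rewrite Hx Hy !orFb eqxx => qy qx.
  by apply: connect_trans _ qy; rewrite cut_connect_sym.
Qed.

Lemma path_edge_separates f t x : path e x t -> uniq (x :: t) ->
  f \in walk_edges x t -> ~~ connect (cut f) x (last x t).
Proof.
elim: t x => // y t IH x /= /andP[exy pt] /andP[xnin ut].
rewrite /walk_edges /= in_cons.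
case: (eqVneq f [set x; y]) => [-> _ | fxy] /=.
  apply/negP => Hxl; move/negP: (cut_ends exy); apply.
  by apply: connect_trans Hxl _; rewrite cut_connect_sym; apply: connect_cut_avoid.
move=> fw; apply: contra (IH y pt ut fw) => Hxl.
have cyx : cut f y x by rewrite /cut e_sym exy setUC eq_sym fxy.
exact: connect_trans (connect1 cyx) Hxl.
Qed.

Lemma path_cut f t x : path e x t -> f \notin walk_edges x t -> path (cut f) x t.
Proof.
elim: t x => // y t IH x /= /andP[exy pt].
rewrite /walk_edges /= in_cons negb_or => /andP[fxy fw].
by rewrite /cut exy eq_sym fxy /=; apply: IH.
Qed.

Lemma on_pathE p q x y : e p q ->
  on_path e x y [set p; q] = ~~ connect (cut [set p; q]) x y.
Proof.
move=> epq; apply/idP/idP.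
  case/existsP => k /existsP [t /and4P [pt /eqP <- ut ft]].
  exact: path_edge_separates.
move=> sep; have [t pt ly] := connectP (e_conn x y); move: ly.
case/shortenP: pt => t' pt' ut' _ ly.
have size_t' : size t' < #|V|.
  by have := max_card (mem (x :: t')); rewrite (card_uniqP ut').
apply/existsP; exists (Ordinal size_t'); apply/existsP; exists (in_tuple t').
rewrite pt' -ly eqxx ut' /=.
apply/negPn/negP => nf; move/negP: sep; apply; rewrite ly.
by apply/connectP; exists t' => //; apply: path_cut.
Qed.

Lemma on_cordE x y p q : x != y -> e p q ->
  on_cord_path e [set x; y] [set p; q] = ~~ connect (cut [set p; q]) x y.
Proof.
move=> xy epq; apply/idP/idP.
  case/exists_inP => x0 x0in /exists_inP [y0 y0in /andP [ne]].
  rewrite on_pathE //.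
  by move: x0in y0in ne; rewrite !inE => /orP [] /eqP -> /orP [] /eqP ->;
    rewrite ?eqxx // cut_connect_sym.
move=> sep; apply/exists_inP; exists x; first by rewrite !inE eqxx.
apply/exists_inP; exists y; first by rewrite !inE eqxx orbT.
by rewrite xy on_pathE.
Qed.

Lemma leaf_nbr_uniq a v y : deg e a = 1 -> e a v -> e a y -> y = v.
Proof.
rewrite /deg => /eqP /cards1P [w Nw] eav eay.
have : v \in [set w' | e a w'] by rewrite inE.
have : y \in [set w' | e a w'] by rewrite inE.
by rewrite Nw !inE => /eqP -> /eqP ->.
Qed.

Lemma nbr_exists x y : x != y -> exists w, e x w.
Proof.
move=> xy; have [[|w t] /= pt lt] := connectP (e_conn x y).
  by rewrite lt eqxx in xy.
by exists w; case/andP: pt.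
Qed.

Lemma deg_gt0 x w : e x w -> 0 < deg e x.
Proof. by move=> exw; apply/card_gt0P; exists w; rewrite inE. Qed.

Lemma leaf_neq z u : deg e z = 1 -> deg e u != 1 -> z != u.
Proof. by move=> dz du; apply: contraNneq du => <-; rewrite dz. Qed.

(* Every vertex z other than u lies on exactly one branch at u: the one
   through the last edge of the path from z to u. *)
Lemma branch u z : z != u ->
  exists m, e u m /\ forall n, e u n -> side u n z = (n == m).
Proof.
move=> zu; have [t pt lt] := connectP (e_conn z u); move: lt.
case/shortenP: pt => t' pt' ut' _.
case/lastP: t' pt' ut' => [|t1 l] pt' ut'.
  by move=> /= zu'; rewrite zu' eqxx in zu.
rewrite last_rcons => lu; subst l.
move: pt'; rewrite rcons_path => /andP [pt1 emu].
have unin : u \notin z :: t1.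
  by move: ut'; rewrite -rcons_cons rcons_uniq => /andP[].
exists (last z t1); split; first by rewrite e_sym.
move=> n eun; rewrite /side.
case: (eqVneq n (last z t1)) => [-> | nm].
  by rewrite cut_connect_sym; apply: connect_cut_avoid.
apply/negP => nz.
have zu_cut : connect (cut [set u; n]) z u.
  apply: connect_trans (connect_cut_avoid n pt1 unin) (connect1 _).
  rewrite /cut emu /=; apply/negP => /eqP mu_un.
  have : last z t1 \in [set u; n] by rewrite -mu_un !inE eqxx.
  rewrite !inE => /orP [/eqP mu | /eqP mn]; first by rewrite mu e_irr in emu.
  by rewrite mn eqxx in nm.
move/negP: (cut_ends eun); apply; rewrite cut_connect_sym.
exact: connect_trans nz zu_cut.
Qed.

Lemma branch_uniq u z n n' : z != u -> e u n -> e u n' ->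
  side u n z -> side u n' z -> n = n'.
Proof.
move=> zu eun eun'; have [m [_ Hm]] := branch zu.
by rewrite (Hm _ eun) (Hm _ eun') => /eqP -> /eqP ->.
Qed.

Lemma branch_neq u z1 z2 n1 n2 : z1 != u -> e u n1 -> e u n2 -> n1 != n2 ->
  side u n1 z1 -> side u n2 z2 -> z1 != z2.
Proof.
move=> z1u e1 e2 n12 s1 s2; apply: contraNneq n12 => z12; subst z2.
by rewrite (branch_uniq z1u e1 e2 s1 s2).
Qed.

Lemma far_branch p q u z1 z2 n : e p q ->
  ~~ connect (cut [set p; q]) u z1 -> ~~ connect (cut [set p; q]) u z2 ->
  side u n z1 -> side u n z2.
Proof.
move=> epq f1 f2.
have c12 : connect (cut [set p; q]) z1 z2.
  move: f1 f2; rewrite (cut_connectE u z1 epq) (cut_connectE u z2 epq).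
  rewrite (cut_connectE z1 z2 epq).
  by case: (connect (cut [set p; q]) p u); case: (connect (cut [set p; q]) p z1);
    case: (connect (cut [set p; q]) p z2).
case/connectP: c12 => t pt lt.
have unin : u \notin z1 :: t.
  apply/negP => ut; have := path_connect pt ut.
  by rewrite cut_connect_sym => uz1; rewrite uz1 in f1.
have := connect_cut_avoid n (sub_path (@cut_sub _) pt) unin; rewrite -lt.
by rewrite /side => z12 s1; exact: connect_trans s1 z12.
Qed.

Lemma far_two p q u z1 z2 n1 n2 : e p q -> z2 != u -> e u n1 -> e u n2 ->
  n1 != n2 -> side u n1 z1 -> side u n2 z2 ->
  connect (cut [set p; q]) u z1 || connect (cut [set p; q]) u z2.
Proof.
move=> epq z2u e1 e2 n12 s1 s2; apply/negPn/negP; rewrite negb_or => /andP [f1 f2].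
have := far_branch epq f1 f2 s1 => s12.
by have := branch_uniq z2u e1 e2 s12 s2 => n1n2; rewrite n1n2 eqxx in n12.
Qed.

Lemma leaf_side a v z : deg e a = 1 -> e a v -> side v a z -> z = a.
Proof.
move=> da eav /connectP [[|y t] pt ->] //.
move: pt => /= /andP [/andP [eay ne] _].
have yv := leaf_nbr_uniq da eav eay; subst y.
by rewrite setUC eqxx in ne.
Qed.

(* If an edge cuts the leaf a off from its neighbour u, it is the pendant
   edge of a, and u stays connected to everything else. *)
Lemma far_leaf a u p q z : deg e a = 1 -> e a u -> e p q -> z != a ->
  ~~ connect (cut [set p; q]) u a -> connect (cut [set p; q]) u z.
Proof.
move=> da eau epq za fa; apply/negPn/negP => fz.
have := far_branch (n := a) epq fa fz (connect0 _ _) => /(leaf_side da eau) za'.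
by rewrite za' eqxx in za.
Qed.

Lemma leaf_joined a u p q z : deg e a = 1 -> e a u -> e p q -> z != a ->
  connect (cut [set p; q]) a z -> connect (cut [set p; q]) u a.
Proof.
move=> da eau epq za az; apply/negPn/negP => ua.
move/negP: (ua); apply; apply: connect_trans (far_leaf da eau epq za ua) _.
by rewrite cut_connect_sym.
Qed.

Lemma path_last_nbr y x s : path e x s -> uniq (x :: s) -> y \in x :: s ->
  e (last x s) y -> exists s1, x :: s = rcons (rcons s1 y) (last x s).
Proof.
elim: s x => [|w s IH] x.
  by rewrite mem_seq1 => _ _ /eqP -> /=; rewrite e_irr.
move=> /= /andP [exw pws] /andP [xnin uws].
rewrite in_cons => /orP [/eqP yx | yin] ely.
  subst y; case: s IH pws uws xnin ely => [|w' s] IH pws uws xnin ely.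
    by exists [::].
  exfalso; have cyc_uniq : uniq [:: x, w, w' & s] by apply/andP; split.
  have := e_acyclic cyc_uniq isT; apply/negP; rewrite negbK /cycle rcons_path.
  by apply/andP; split => //; apply/andP; split.
have [s1 Hs1] := IH w pws uws yin ely.
by exists (x :: s1); rewrite Hs1.
Qed.

(* Extending a simple path beyond the edge pq as long as possible ends in
   a leaf; k bounds the remaining number of extension steps. *)
Lemma leaf_ext p q k : e p q -> forall t, #|V| <= size t + k -> path e q t ->
  uniq [:: p, q & t] -> exists z, deg e z = 1 /\ side p q z.
Proof.
move=> epq; elim: k => [|k IH] t Hk pt ut.
  have := max_card (mem (p :: q :: t)); rewrite (card_uniqP ut) /=.
  by move: Hk; rewrite addn0 => H1 H2; move: (leq_trans H2 H1); lia.
have pnin : p \notin q :: t by case/andP: ut.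
case: (eqVneq (deg e (last q t)) 1) => [dz | dz].
  by exists (last q t); split => //; rewrite /side; apply: connect_cut_avoid.
have zp : last q t != p by apply: contraNneq pnin => <-; rewrite mem_last.
have [w ezw] := nbr_exists zp.
have pqt : path e p (q :: t) by rewrite /= epq pt.
have [y /andP [ezy ynin]] : exists y, e (last q t) y && (y \notin [:: p, q & t]).
  case: (pickP (fun y => e (last q t) y && (y \notin [:: p, q & t]))) => [y Hy | none].
    by exists y.
  exfalso; move/eqP: dz; apply.
  have inL y : e (last q t) y -> y \in [:: p, q & t].
    by move=> ey; have := none y; rewrite ey /= => /negbFE.
  have eqw y : e (last q t) y -> y = w.
    move=> ey.
    have [s1 H1] := path_last_nbr pqt ut (inL y ey) ey.
    have [s2 H2] := path_last_nbr pqt ut (inL w ezw) ezw.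
    by move: H1; rewrite H2 => /rcons_inj [] /rcons_inj [].
  apply/eqP; rewrite eqn_leq (deg_gt0 ezw) andbT /deg.
  rewrite -(cards1 w); apply: subset_leq_card; apply/subsetP => y.
  by rewrite !inE => /eqw ->.
apply: (IH (rcons t y)).
- by rewrite size_rcons addSnnS.
- by rewrite rcons_path pt ezy.
- by rewrite -!rcons_cons rcons_uniq ynin ut.
Qed.

Lemma leaf_exists p q : e p q -> exists z, deg e z = 1 /\ side p q z.
Proof.
move=> epq; apply: (leaf_ext (k := #|V|) epq (t := [::])) => //.
by rewrite /= inE andbT; apply: contraTneq epq => ->; rewrite e_irr.
Qed.

Lemma nbr_avoid u (A : {set V}) : #|A| < deg e u -> exists n, e u n && (n \notin A).
Proof.
move=> H; case: (pickP (fun n => e u n && (n \notin A))) => [n Hn | none].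
  by exists n.
exfalso; move: H; rewrite /deg ltnNge => /negP; apply.
apply: subset_leq_card; apply/subsetP => n; rewrite inE => eun.
by have := none n; rewrite eun /= => /negbFE.
Qed.

Lemma nbr_avoid2 u (A : {set V}) : #|A|.+1 < deg e u ->
  exists n1 n2, [/\ e u n1, e u n2, n1 != n2, n1 \notin A & n2 \notin A].
Proof.
move=> H.
have [n1 /andP [e1 n1A]] := nbr_avoid (ltnW H).
have H2 : #|n1 |: A| < deg e u.
  by apply: leq_ltn_trans H; rewrite cardsU1; case: (n1 \notin A).
have [n2 /andP [e2]] := nbr_avoid H2.
rewrite !inE negb_or => /andP [n21 n2A].
by exists n1, n2; split => //; rewrite eq_sym.
Qed.

Lemma pendantE a u : deg e a = 1 -> e a u -> pendant_edge e a = [set a; u].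
Proof.
move=> da eau; rewrite /pendant_edge.
case: pickP => [f /andP [/imsetP [[p q]] /= + -> af] | none].
  rewrite inE /= => epq; move: af; rewrite !inE => /orP [] /eqP pa; subst a.
    by rewrite (leaf_nbr_uniq da eau epq).
  by rewrite (leaf_nbr_uniq da eau (_ : e q p)) 1?setUC // e_sym.
have := none [set a; u]; rewrite /= setU11 andbT => /negbT /negP; case.
by apply/imsetP; exists (a, u); rewrite ?inE.
Qed.

Hypothesis no_deg2 : forall v, deg e v != 2.

Lemma deg3 u w : e u w -> deg e u != 1 -> 3 <= deg e u.
Proof.
move=> euw d1; have := deg_gt0 euw; have := no_deg2 u; move: d1.
by case: (deg e u) => [|[|[|k]]].
Qed.

(* For every edge uw there are leaves x1, x2 on the u-side such that, for
   every edge pq, u stays connected to one of them, and to both of them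
   unless it stays connected to each vertex on the w-side.  (If u is a
   leaf, x1 = x2 = u.) *)
Lemma leaves_at_end u w : e u w -> exists x1 x2, [/\ deg e x1 = 1, deg e x2 = 1,
  connect (cut [set u; w]) u x1, connect (cut [set u; w]) u x2 &
  forall p q, e p q ->
    (connect (cut [set p; q]) u x1 || connect (cut [set p; q]) u x2) /\
    forall z, side u w z ->
      (connect (cut [set p; q]) u x1 || connect (cut [set p; q]) u z) &&
      (connect (cut [set p; q]) u x2 || connect (cut [set p; q]) u z)].
Proof.
move=> euw; case: (eqVneq (deg e u) 1) => [du | du].
  exists u, u; split => //; try exact: connect0.
  by move=> p q epq; split => [|z _]; rewrite connect0.
have [n1 [n2 [e1 e2 n12]]] : exists n1 n2,
    [/\ e u n1, e u n2, n1 != n2, n1 \notin [set w] & n2 \notin [set w]].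
  by apply: nbr_avoid2; rewrite cards1 (deg3 euw du).
rewrite !inE => n1w n2w.
have [x1 [dx1 s1]] := leaf_exists e1; have [x2 [dx2 s2]] := leaf_exists e2.
have x1u := leaf_neq dx1 du; have x2u := leaf_neq dx2 du.
have u_side x n : x != u -> e u n -> n != w -> side u n x ->
    connect (cut [set u; w]) u x.
  move=> xu eun nw sx; case/orP: (cut_two_sides u w x) => // wx.
  by have := branch_uniq xu euw eun wx sx => wn; rewrite wn eqxx in nw.
exists x1, x2; split => //; [exact: u_side s1 | exact: u_side s2 |].
move=> p q epq; split; first exact: (far_two epq x2u e1 e2 n12 s1 s2).
move=> z sz.
have zu : z != u.
  by apply: contraTneq sz => ->; rewrite /side cut_connect_sym (negbTE (cut_ends euw)).
by rewrite (far_two epq zu e1 euw n1w s1 sz) (far_two epq zu e2 euw n2w s2 sz).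
Qed.

Variable R : realFieldType.

Lemma edgeT_ends (f : edgeT e) : exists p q, e p q /\ val f = [set p; q].
Proof. by case: f => f /= /imsetP [[p q]]; rewrite inE /= => epq ->; exists p, q. Qed.

Lemma edge_in_Edges p q : e p q -> [set p; q] \in Edges e.
Proof. by move=> epq; apply/imsetP; exists (p, q); rewrite ?inE. Qed.

Definition edge_of p q (epq : e p q) : edgeT e := exist _ [set p; q] (edge_in_Edges epq).

Lemma edge_of_eq v n m (evn : e v n) (evm : e v m) :
  (edge_of evn == edge_of evm) = (n == m).
Proof.
apply/idP/eqP => [/eqP/(congr1 val) /= nm | nm]; last by subst m; rewrite (bool_irrelevance evn evm).
have : n \in [set v; m] by rewrite -nm !inE eqxx orbT.
rewrite !inE => /orP [/eqP nv | /eqP //]; by rewrite nv e_irr in evn.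
Qed.

Definition edge_delta (f : edgeT e) : {ffun edgeT e -> R^o} := [ffun g => (g == f)%:R%R].

Definition split_vec (x y : V) : {ffun edgeT e -> R^o} :=
  [ffun f => (~~ connect (cut (val f)) x y)%:R%R].

Lemma lamE x y : x != y -> lam e R [set x; y] = split_vec x y.
Proof.
move=> xy; apply/ffunP => f; rewrite !ffunE.
by have [p [q [epq ->]]] := edgeT_ends f; rewrite on_cordE.
Qed.

Lemma split_vec0 x : split_vec x x = 0%R.
Proof. by apply/ffunP => g; rewrite !ffunE connect0. Qed.

Lemma split_vecC x y : split_vec x y = split_vec y x.
Proof. by apply/ffunP => g; rewrite !ffunE cut_connect_sym. Qed.

Definition splits (f : {set V}) (x1 x2 y1 y2 : V) : bool :=
  [&& connect (cut f) x1 x2, connect (cut f) y1 y2 & ~~ connect (cut f) x1 y1].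

Lemma split_vec_quartet x1 x2 y1 y2 :
  (split_vec x1 y1 + split_vec x2 y2 - split_vec x1 x2 - split_vec y1 y2 =
   2%:R *: [ffun g : edgeT e =>
     (splits (val g) x1 x2 y1 y2)%:R - (splits (val g) x1 y1 x2 y2)%:R])%R.
Proof.
apply/ffunP => g; rewrite !ffunE; have [p [q [epq ->]]] := edgeT_ends g.
rewrite /splits (cut_connectE x1 x2 epq) (cut_connectE y1 y2 epq).
rewrite (cut_connectE x1 y1 epq) (cut_connectE x2 y2 epq).
by case: (connect _ p x1); case: (connect _ p x2); case: (connect _ p y1);
  case: (connect _ p y2); rewrite /GRing.scale /=; ring.
Qed.

Lemma split_vec_exchange a b c d :
  (forall p q, e p q -> ~~ splits [set p; q] a b c d) ->
  (forall p q, e p q -> ~~ splits [set p; q] a c b d) ->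
  split_vec a b = (split_vec a c + split_vec b d - split_vec c d)%R.
Proof.
move=> nabcd nacbd; apply/ffunP => g; have := split_vec_quartet a c b d.
move/ffunP/(_ g); rewrite !ffunE; have [p [q [epq vg]]] := edgeT_ends g.
by rewrite vg (negbTE (nabcd _ _ epq)) (negbTE (nacbd _ _ epq)) /GRing.scale /=; lra.
Qed.

Lemma dim_edges : \dim (fullv : {vspace {ffun edgeT e -> R^o}}) = #|Edges e|.
Proof. by rewrite dimvf /dim /= muln1 card_sig. Qed.

Lemma lasso_span X L : is_lasso e R X L -> <<[seq lam e R c | c <- enum L]>>%VS = fullv.
Proof.
by case=> _ rkL; apply/eqP; rewrite eqEdim subvf /= dim_edges -rkL /rkT leqnn.
Qed.

Lemma coloop_of_form X c0 (phi : {ffun edgeT e -> R^o} -> R) :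
  (forall k u v, phi (k *: u + v) = k * phi u + phi v)%R ->
  (forall c, is_cord X c -> c != c0 -> phi (lam e R c) = 0%R) ->
  (exists w, phi w != 0%R) ->
  forall L, is_lasso e R X L -> c0 \in L.
Proof.
move=> phi_lin phi_cords [w phiw] L lassoL; apply/negPn/negP => c0L.
have phi_L : {in [seq lam e R c | c <- enum L], forall v, phi v = 0%R}.
  move=> _ /mapP [c + ->]; rewrite mem_enum => cL.
  by apply: phi_cords; [case: lassoL => + _; apply | apply: contraNneq c0L => <-].
move/negP: phiw; apply; apply/eqP; apply: span_kernel phi_L _ _ => //.
by rewrite (lasso_span lassoL) memvf.
Qed.

Lemma split_vec_edge_of x y v n (evn : e v n) :
  split_vec x y (edge_of evn) = (side v n x != side v n y)%:R%R.
Proof.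
have side_v z : connect (cut [set v; n]) v z = ~~ side v n z.
  have := cut_two_sides v n z; have := cut_ends evn; rewrite /side.
  case vz: (connect _ v z); case nz: (connect _ n z) => //= /negP[].
  by apply: connect_trans vz _; rewrite cut_connect_sym.
by rewrite ffunE /= (cut_connectE _ _ evn) !side_v; case: (side v n x); case: (side v n y).
Qed.

Lemma deg3_nbrs v a b g : deg e v = 3 -> e v a -> e v b -> e v g ->
  a != b -> g \notin [set a; b] -> forall n, e v n -> [|| n == a, n == b | n == g].
Proof.
move=> dv eva evb evg ab gab n evn; apply/negPn/negP; rewrite !negb_or => /and3P [na nb ng].
have uniq4 : uniq [:: a; b; g; n].
  have [ga gb] : g != a /\ g != b by move: gab; rewrite !inE negb_or => /andP[].
  rewrite /= !inE !negb_or ab (eq_sym a g) ga (eq_sym a n) na (eq_sym b g) gb.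
  by rewrite (eq_sym b n) nb (eq_sym g n) ng.
have : #|[set z in [:: a; b; g; n]]| <= deg e v.
  by apply: subset_leq_card; apply/subsetP => z; rewrite !inE => /or4P [] /eqP ->.
by rewrite cardsE (card_uniqP uniq4) dv.
Qed.

Section ProperCherry.
Variables (a b v g : V).
Hypotheses (da : deg e a = 1) (db : deg e b = 1) (ab : a != b).
Hypotheses (eva : e v a) (evb : e v b) (evg : e v g) (gab : g \notin [set a; b]).
Hypothesis dv : deg e v = 3.

Definition cherry_form (w : {ffun edgeT e -> R^o}) : R :=
  (w (edge_of eva) + w (edge_of evb) - w (edge_of evg))%R.

(* The form vanishes on every split vector of two leaves except that of
   the cherry: two leaves on branches a, g (or b, g, or the same branch)
   at v are separated by none or by exactly one of va, vg (resp. vb, vg). *)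
Lemma cherry_form_split x y : deg e x = 1 -> deg e y = 1 ->
  [set x; y] != [set a; b] -> cherry_form (split_vec x y) = 0%R.
Proof.
move=> dx dy xyab.
have [xv yv] : x != v /\ y != v by rewrite !leaf_neq // dv.
have [mx [evmx Hx]] := branch xv; have [my [evmy Hy]] := branch yv.
have leaf_branch z m : deg e z = 1 -> (forall n, e v n -> side v n z = (n == m)) ->
    forall c, deg e c = 1 -> e v c -> m = c -> z = c.
  move=> dz Hz c dc evc mc; apply: (leaf_side dc (_ : e c v)); first by rewrite e_sym.
  by rewrite (Hz c evc) mc.
have ba : b != a by rewrite eq_sym.
have [ga gb] : g != a /\ g != b by move: gab; rewrite !inE negb_or => /andP[].
rewrite /cherry_form !split_vec_edge_of (Hx _ eva) (Hy _ eva) (Hx _ evb) (Hy _ evb).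
rewrite (Hx _ evg) (Hy _ evg).
case/or3P: (deg3_nbrs dv eva evb evg ab gab evmx) => /eqP mxE;
case/or3P: (deg3_nbrs dv eva evb evg ab gab evmy) => /eqP myE; subst mx my;
  rewrite ?eqxx ?(negbTE ab) ?(negbTE ba) ?(negbTE ga) ?(negbTE gb)
          1?[a == g]eq_sym 1?[b == g]eq_sym ?(negbTE ga) ?(negbTE gb) /=;
  try by rewrite /=; ring.
- by rewrite (leaf_branch x a dx Hx a da eva) ?(leaf_branch y b dy Hy b db evb) ?eqxx in xyab.
- by rewrite (leaf_branch x b dx Hx b db evb) ?(leaf_branch y a dy Hy a da eva) // setUC eqxx in xyab.
Qed.

Lemma cherry_form_delta : cherry_form (edge_delta (edge_of eva)) != 0%R.
Proof.
have ba : b != a by rewrite eq_sym.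
have [ga _] : g != a /\ g != b by move: gab; rewrite !inE negb_or => /andP[].
rewrite /cherry_form !ffunE eqxx !edge_of_eq (negbTE ba) (negbTE ga) /=.
by rewrite subr0 addr0 oner_eq0.
Qed.

Lemma proper_cherry_coloop L :
  is_lasso e R [set z | deg e z == 1] L -> [set a; b] \in L.
Proof.
apply: (coloop_of_form (phi := cherry_form)).
- by move=> k u w; rewrite /cherry_form !ffunE /GRing.scale /=; ring.
- move=> c /andP [cX /cards2P [x [y [xy cE]]]] xyab; subst c; rewrite lamE //.
  by apply: cherry_form_split => //; apply/eqP;
    [move/subsetP/(_ x): cX | move/subsetP/(_ y): cX]; rewrite !inE eqxx ?orbT => /(_ isT).
- by exists (edge_delta (edge_of eva)); exact: cherry_form_delta.
Qed.

End ProperCherry.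

(* Solving the four-point identity for an edge f that alone induces the
   split x1 x2 | y1 y2, when no edge induces x1 y1 | x2 y2. *)
Lemma edge_delta_split f x1 x2 y1 y2 :
  (forall g : edgeT e, splits (val g) x1 x2 y1 y2 = (g == f)) ->
  (forall g : edgeT e, ~~ splits (val g) x1 y1 x2 y2) ->
  edge_delta f = (2%:R^-1 *:
    (split_vec x1 y1 + split_vec x2 y2 - split_vec x1 x2 - split_vec y1 y2))%R.
Proof.
move=> split_f no_split; rewrite split_vec_quartet scalerA mulVf ?pnatr_eq0 // scale1r.
by apply/ffunP => g; rewrite !ffunE split_f (negbTE (no_split g)) subr0.
Qed.

Lemma edge_quartet u w (euw : e u w) : exists x1 x2 y1 y2,
  [/\ [/\ deg e x1 = 1, deg e x2 = 1, deg e y1 = 1 & deg e y2 = 1],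
      forall g : edgeT e, splits (val g) x1 x2 y1 y2 = (g == edge_of euw) &
      forall g : edgeT e, ~~ splits (val g) x1 y1 x2 y2].
Proof.
have ewu : e w u by rewrite e_sym.
have [x1 [x2 [dx1 dx2 cx1 cx2 Hx]]] := leaves_at_end euw.
have [y1 [y2 [dy1 dy2 cy1 cy2 Hy]]] := leaves_at_end ewu.
rewrite setUC in cy1 cy2.
have at_f : splits [set u; w] x1 x2 y1 y2 && ~~ splits [set u; w] x1 y1 x2 y2.
  move: cx1 cx2 cy1 cy2 (cut_ends euw); rewrite /splits.
  rewrite (cut_connectE x1 x2 euw) (cut_connectE y1 y2 euw) (cut_connectE x1 y1 euw).
  rewrite (cut_connectE x2 y2 euw) (cut_connectE u x1 euw) (cut_connectE u x2 euw).
  rewrite (cut_connectE w y1 euw) (cut_connectE w y2 euw) (cut_connectE u w euw).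
  by case: (connect _ u w); case: (connect _ u x1);
    case: (connect _ u x2); case: (connect _ u y1); case: (connect _ u y2); rewrite connect0.
have off_f p q : e p q -> [set p; q] != [set u; w] ->
    ~~ splits [set p; q] x1 x2 y1 y2 && ~~ splits [set p; q] x1 y1 x2 y2.
  move=> epq pq_uw; have [hx1 hx2] := Hx p q epq; have [hy1 _] := Hy p q epq.
  have cuw : connect (cut [set p; q]) u w by apply: connect1; rewrite /cut euw eq_sym.
  move: (hx2 y1 cy1) (hx2 y2 cy2) hx1 hy1 cuw; rewrite /splits.
  rewrite (cut_connectE x1 x2 epq) (cut_connectE y1 y2 epq) (cut_connectE x1 y1 epq).
  rewrite (cut_connectE x2 y2 epq) (cut_connectE u x1 epq) (cut_connectE u x2 epq).
  rewrite (cut_connectE u y1 epq) (cut_connectE u y2 epq) (cut_connectE w y1 epq).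
  rewrite (cut_connectE w y2 epq) (cut_connectE u w epq).
  by case: (connect _ p u); case: (connect _ p w); case: (connect _ p x1);
    case: (connect _ p x2); case: (connect _ p y1); case: (connect _ p y2).
have off_edgeT (g : edgeT e) : g != edge_of euw ->
    ~~ splits (val g) x1 x2 y1 y2 && ~~ splits (val g) x1 y1 x2 y2.
  have [p [q [epq vg]]] := edgeT_ends g; rewrite vg => gf; apply: off_f epq _.
  by rewrite -vg -[[set u; w]]/(val (edge_of euw)) (inj_eq val_inj).
exists x1, x2, y1, y2; split => // g;
  case: (eqVneq g (edge_of euw)) => [-> | /off_edgeT /andP [nsplit1 nsplit2]] //=.
- by rewrite ?eqxx; case/andP: at_f.
- by apply/negbTE.
- by case/andP: at_f.
Qed.

Lemma leaf_splits_span (S : {vspace {ffun edgeT e -> R^o}}) :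
  (forall x y, deg e x = 1 -> deg e y = 1 -> split_vec x y \in S) -> S = fullv.
Proof.
move=> HS; apply/eqP; rewrite eqEsubv subvf /=; apply/subvP => w _.
have -> : w = (\sum_f w f *: edge_delta f)%R.
  apply/ffunP => g; rewrite sum_ffunE (bigD1 g) //= big1 ?addr0.
    by rewrite !ffunE eqxx /GRing.scale /= mulr1.
  by move=> h hg; rewrite !ffunE eq_sym (negbTE hg) /GRing.scale /= mulr0.
apply: memv_suml => f _; apply: memvZ.
have [u [w' [euw vf]]] := edgeT_ends f.
have -> : f = edge_of euw by apply: val_inj.
have [x1 [x2 [y1 [y2 [[dx1 dx2 dy1 dy2] split_f no_split]]]]] := edge_quartet euw.
by rewrite (edge_delta_split split_f no_split) memvZ // !(rpredB, rpredD) // HS.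
Qed.

(* No edge induces ab | cd when a is a leaf with neighbour u and c, d lie
   on different branches at u: such an edge would leave a joined to u but
   cut both c and d off from u. *)
Lemma leaf_branches_no_split a b c d u n n' : deg e a = 1 -> e a u ->
  b != a -> d != u -> e u n -> e u n' -> n != n' -> side u n c -> side u n' d ->
  forall p q, e p q -> ~~ splits [set p; q] a b c d.
Proof.
move=> da eau ba du en en' nn' sc sd p q epq; apply/and3P => [[ab cd nac]].
have ua := leaf_joined da eau epq ba ab; rewrite cut_connect_sym in ua.
move/negP: nac; apply; case/orP: (far_two epq du en en' nn' sc sd) => [uc | ud].
  exact: connect_trans ua uc.
by apply: connect_trans (connect_trans ua ud) _; rewrite cut_connect_sym.
Qed.

(* Two leaves with a common neighbour stay joined to each other whenever
   both are joined to anything else, so no edge induces ac | bd. *)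
Lemma cherry_no_split a b c d u : deg e a = 1 -> deg e b = 1 -> e a u -> e b u ->
  c != a -> d != b -> forall p q, e p q -> ~~ splits [set p; q] a c b d.
Proof.
move=> da db eau ebu ca db' p q epq; apply/and3P => [[ac bd nab]].
have ua := leaf_joined da eau epq ca ac; have ub := leaf_joined db ebu epq db' bd.
by move/negP: nab; apply; rewrite cut_connect_sym in ua; exact: connect_trans ua ub.
Qed.

Lemma apart_no_split a b c d u w n t : deg e a = 1 -> deg e b = 1 ->
  e a u -> e b w -> d != a -> c != b -> w != u -> e u n -> e u t -> n != t ->
  side u n c -> side u t w -> forall p q, e p q -> ~~ splits [set p; q] a d b c.
Proof.
move=> da db eau ebw da' cb wu en et nt sc sw p q epq; apply/and3P => [[ad bc nab]].
have ua := leaf_joined da eau epq da' ad.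
have wb := leaf_joined db ebw epq cb bc.
rewrite cut_connect_sym in ua; move/negP: nab; apply.
case/orP: (far_two epq wu en et nt sc sw) => [uc | uw].
  by apply: connect_trans (connect_trans ua uc) _; rewrite cut_connect_sym.
exact: connect_trans (connect_trans ua uw) wb.
Qed.

Hypothesis many_leaves : 2 < #|[set v | deg e v == 1]|.

Lemma leaf_nbr_not_leaf a u : deg e a = 1 -> e a u -> deg e u != 1.
Proof.
move=> da eau; apply/eqP => du.
have sub : [set v | deg e v == 1] \subset [set a; u].
  apply/subsetP => z _; have [t pt ->] := connectP (e_conn a z).
  suff closed x s : path e x s -> x \in [set a; u] -> last x s \in [set a; u].
    by apply: closed pt _; rewrite !inE eqxx.
  elim: s x => // y s IH x /= /andP [exy ps] xin; apply: IH ps _.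
  move: xin; rewrite !inE => /orP [/eqP xa | /eqP xu]; subst x.
    by rewrite (leaf_nbr_uniq da eau exy) eqxx orbT.
  by rewrite (leaf_nbr_uniq du (_ : e u a) exy) ?eqxx // e_sym.
by have := subset_leq_card sub; rewrite cards2; case: (a != u) => /=; lia.
Qed.

Section NotProperCherry.
Variables (a b : V) (S : {vspace {ffun edgeT e -> R^o}}).
Hypotheses (da : deg e a = 1) (db : deg e b = 1) (ab : a != b).
Hypothesis S_splits : forall x y, deg e x = 1 -> deg e y = 1 ->
  (x \notin [set a; b]) || (y \notin [set a; b]) -> split_vec x y \in S.

Lemma branch_leaf_outside u n c m m' : deg e u != 1 -> e u n -> side u n c ->
  deg e c = 1 -> e u m -> e u m' -> n != m -> n != m' -> side u m a -> side u m' b ->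
  c \notin [set a; b].
Proof.
move=> du en sc dc em em' nm nm' sa sb; have cu := leaf_neq dc du.
by rewrite !inE negb_or (branch_neq cu en em nm sc sa) (branch_neq cu en em' nm' sc sb).
Qed.

(* If a and b hang at the same vertex u of degree at least 4, two further
   leaves c, d on other branches at u give the relation
   split_vec a b = split_vec a c + split_vec b d - split_vec c d. *)
Lemma shared_nbr_split u : e a u -> e b u -> 3 < deg e u -> split_vec a b \in S.
Proof.
move=> eau ebu du4.
have du : deg e u != 1 by apply: contraTneq du4 => ->.
have [eua eub] : e u a /\ e u b by rewrite !(e_sym u).
have [n [n' [en en' nn']]] : exists n n',
    [/\ e u n, e u n', n != n', n \notin [set a; b] & n' \notin [set a; b]].
  by apply: nbr_avoid2; rewrite cards2 ab.
rewrite !inE !negb_or => /andP [na nb] /andP [n'a n'b].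
have [c [dc sc]] := leaf_exists en; have [d [dd sd]] := leaf_exists en'.
have cab := branch_leaf_outside du en sc dc eua eub na nb (connect0 _ _) (connect0 _ _).
have dab := branch_leaf_outside du en' sd dd eua eub n'a n'b (connect0 _ _) (connect0 _ _).
move: (cab) (dab); rewrite !inE !negb_or => /andP [ca cb] /andP [d_a d_b].
rewrite (split_vec_exchange (c := c) (d := d)).
- by rewrite !(rpredB, rpredD) //; apply: S_splits; rewrite // ?cab ?dab ?orbT.
- by apply: (leaf_branches_no_split da eau _ (leaf_neq dd du) en en' nn' sc sd);
    rewrite eq_sym.
- exact: cherry_no_split da db eau ebu ca d_b.
Qed.

(* If the neighbours u, w of a and b differ, pick a leaf c beyond u away
   from w and a leaf d beyond w away from u; then
   split_vec a b = split_vec a d + split_vec b c - split_vec d c. *)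
Lemma apart_split u w : e a u -> e b w -> u != w -> split_vec a b \in S.
Proof.
move=> eau ebw uw.
have du := leaf_nbr_not_leaf da eau; have dw := leaf_nbr_not_leaf db ebw.
have [eua ewb] : e u a /\ e w b by rewrite !(e_sym u) !(e_sym w).
have du3 := deg3 eua du; have dw3 := deg3 ewb dw.
have wu : w != u by rewrite eq_sym.
have [t [eut Ht]] := branch wu; have [s [ews Hs]] := branch uw.
have sut : side u t w by rewrite Ht // eqxx.
have [n /andP [en]] : exists n, e u n && (n \notin [set a; t]).
  by apply: nbr_avoid; apply: leq_trans du3; rewrite cards2; case: (a != t).
rewrite !inE negb_or => /andP [na nt].
have [n' /andP [en']] : exists n', e w n' && (n' \notin [set b; s]).
  by apply: nbr_avoid; apply: leq_trans dw3; rewrite cards2; case: (b != s).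
rewrite !inE negb_or => /andP [n'b n's].
have [c [dc sc]] := leaf_exists en; have [d [dd sd]] := leaf_exists en'.
have ta : t != a.
  apply: contraNneq (leaf_neq db du) => ta; move: sut; rewrite ta.
  move/(leaf_side da eau) => wa; rewrite -(leaf_nbr_uniq da eau (_ : e a b)) //.
  by rewrite -wa e_sym.
have sutb : side u t b.
  apply: connect_trans sut (connect1 _); rewrite /cut ewb /=.
  apply/negP => /eqP wb_ut; have : u \in [set w; b] by rewrite wb_ut !inE eqxx.
  by rewrite !inE (negbTE uw) /= eq_sym (negbTE (leaf_neq db du)).
have sutd : side u t d.
  have n'u : ~~ connect (cut [set w; n']) u n'.
    by rewrite cut_connect_sym -/(side w n' u) (Hs n' en').
  have n'd : ~~ connect (cut [set w; n']) u d.
    apply: contra n'u => ud; apply: connect_trans ud _; by rewrite cut_connect_sym.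
  apply: (far_branch en' n'u n'd); apply: connect_trans sut (connect1 _).
  rewrite /cut en' /=; apply/negP => /eqP wn'_ut.
  have : u \in [set w; n'] by rewrite wn'_ut !inE eqxx.
  rewrite !inE (negbTE uw) /= => /eqP un'; subst n'.
  by move: n's; rewrite -(Hs u en') /side connect0.
have cab := branch_leaf_outside du en sc dc eua eut na nt (connect0 _ _) sutb.
have dab : d \notin [set a; b].
  rewrite !inE negb_or (branch_neq (leaf_neq dd du) eut eua ta sutd (connect0 _ _)).
  exact: (branch_neq (leaf_neq dd dw) en' ewb n'b sd (connect0 _ _)).
move: (cab) (dab); rewrite !inE !negb_or => /andP [ca cb] /andP [d_a d_b].
rewrite (split_vec_exchange (c := d) (d := c)).
- by rewrite !(rpredB, rpredD) //; apply: S_splits; rewrite // ?cab ?dab ?orbT.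
- by apply: (leaf_branches_no_split da eau _ (leaf_neq dc du) eut en _ sutd sc);
    rewrite eq_sym.
- exact: apart_no_split da db eau ebw d_a cb wu en eut nt sc sut.
Qed.

Lemma not_proper_cherry_split : ~~ is_proper_cherry e a b -> split_vec a b \in S.
Proof.
move=> npc.
have ba : b != a by rewrite eq_sym.
have [u eau] := nbr_exists ab; have [w ebw] := nbr_exists ba.
case: (eqVneq u w) => [uw | uw]; last exact: apart_split eau ebw uw.
subst w; apply: (shared_nbr_split eau ebw).
have du := leaf_nbr_not_leaf da eau.
rewrite ltn_neqAle (@deg3 u a) ?(e_sym u) // andbT; apply: contraNneq npc => du3.
apply/existsP; exists u.
by rewrite (pendantE da eau) (pendantE db ebw) !inE !eqxx !orbT -du3 eqxx.
Qed.

End NotProperCherry.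

Lemma lasso_without a b : deg e a = 1 -> deg e b = 1 -> a != b ->
  ~~ is_proper_cherry e a b ->
  is_lasso e R [set z | deg e z == 1]
    [set c | is_cord [set z | deg e z == 1] c & c != [set a; b]].
Proof.
move=> da db ab npc; split=> [c | ]; first by rewrite inE => /andP [].
rewrite /rkT; set L := [set c | _ & _]; set S := <<_>>%VS.
have S_splits x y : deg e x = 1 -> deg e y = 1 ->
    (x \notin [set a; b]) || (y \notin [set a; b]) -> split_vec x y \in S.
  move=> dx dy xy_ab; have [-> | xy] := eqVneq x y; first by rewrite split_vec0 mem0v.
  rewrite -lamE //; apply/memv_span/mapP; exists [set x; y] => //.
  rewrite mem_enum inE /is_cord cards2 xy andbT; apply/andP; split.
    by apply/subsetP => z; rewrite !inE => /orP [] /eqP ->; rewrite ?dx ?dy.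
  by apply: contraTneq xy_ab => <-; rewrite !inE !eqxx ?orbT.
rewrite (@leaf_splits_span S) ?dim_edges // => x y dx dy.
case/boolP: ((x \notin [set a; b]) || (y \notin [set a; b])) => [|/norP []];
  first exact: S_splits.
rewrite !inE !negbK => /orP [] /eqP -> /orP [] /eqP ->; rewrite ?split_vec0 ?mem0v //.
  exact: not_proper_cherry_split.
by rewrite split_vecC; exact: not_proper_cherry_split.
Qed.

Lemma proper_cherry_vertex a b : deg e a = 1 -> deg e b = 1 -> a != b ->
  is_proper_cherry e a b -> exists v g,
    [/\ e v a, e v b, e v g, g \notin [set a; b] & deg e v = 3].
Proof.
move=> da db ab /existsP [v /and3P [va vb /eqP dv]].
have ba : b != a by rewrite eq_sym.
have [u eau] := nbr_exists ab; have [w ebw] := nbr_exists ba.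
have [va' vb'] : v != a /\ v != b by split; rewrite eq_sym leaf_neq ?dv.
move: va vb; rewrite (pendantE da eau) (pendantE db ebw) !inE.
rewrite (negbTE va') (negbTE vb') /= => /eqP uv /eqP wv; subst u w.
have [g /andP [evg gab]] : exists g, e v g && (g \notin [set a; b]).
  by apply: nbr_avoid; rewrite cards2 dv; case: (a != b).
by exists v, g; split; rewrite // e_sym.
Qed.

Lemma coloop_iff_proper_cherry a b : deg e a = 1 -> deg e b = 1 -> a != b ->
  (forall L, is_lasso e R [set z | deg e z == 1] L -> [set a; b] \in L) <->
  is_proper_cherry e a b.
Proof.
move=> da db ab; split => [coloop | pc L].
  apply: contraTT isT => npc; have := coloop _ (lasso_without da db ab npc).
  by rewrite inE eqxx andbF.
have [v [g [eva evb evg gab dv]]] := proper_cherry_vertex da db ab pc.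
exact: (proper_cherry_coloop da db ab eva evb evg gab dv).
Qed.

End Tree.

Theorem mainTheorem6 (V : finType) (e : rel V) (X : {set V})
    (HT : is_Xtree e X) (HX : 3 <= #|X|) (R : realFieldType) (a b : V)
    (Hab : is_cord X [set a; b]) :
  (forall L : {set {set V}}, is_lasso e R X L -> [set a; b] \in L) <->
  is_proper_cherry e a b.
Proof.
case: HT => [[e_sym e_irr e_conn e_acyclic] XE no_deg2]; subst X.
case/andP: Hab => /subsetP ab_leaves /cards2P [x [y [xy xyE]]].
have ab : a != b.
  apply: (contraNneq _ xy) => ab; subst b; rewrite setUid in xyE.
  by move: (cards1 a); rewrite xyE cards2; case: eqP.
have leaf z : z \in [set a; b] -> deg e z = 1 by move/ab_leaves; rewrite inE => /eqP.
have [da db] : deg e a = 1 /\ deg e b = 1 by rewrite !leaf // !inE eqxx ?orbT.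
exact: coloop_iff_proper_cherry.
Qed.
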